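(* Let $d\ge3$ and $k\in\mathbb Z_{\geq0}$. Let $\mathbf z_{k+1},\dots,\mathbf z_{k+d}$ be a basis of $\mathbb Z^d$ with $|\underline{\mathbf z_{k+1}}|\leq|\underline{\mathbf z_{k+2}}|\leq|\underline{\mathbf z_{k+3}}|$ and $\langle\underline{\mathbf z_{k+1}},\underline{\mathbf z_{k+2}}\rangle\leq0$. If $d\geq4$, assume moreover $\det\underline\Lambda_{k+1,n}>|\underline{\mathbf z_{k+2}}|\det\underline\Lambda_{k+1,n-1}$ for $n=3,\dots,d-1$. Let $\boldsymbol\alpha$ be any point of $\mathfrak S_{k+1}\cap\operatorname{int}\mathfrak S_{k+2}$ satisfying $\langle\boldsymbol\alpha,\mathbf z_{k+2}\rangle\cdot\langle\boldsymbol\alpha_{k+2},\mathbf z_{k+1}\rangle\geq0$. Then: (i) for any $\mathbf z\in\mathbb Z^d$ with $|\underline{\mathbf z}|\leq|\underline{\mathbf z_{k+2}}|$, $\mathbf z\neq\mathbf 0,\pm\mathbf z_{k+2}$, we have $|L_{\boldsymbol\alpha}(\mathbf z)|\geq|L_{\boldsymbol\alpha}(\mathbf z_{k+1})|>|L_{\boldsymbol\alpha}(\mathbf z_{k+2})|$; (ii) $\dfrac{1}{2D_{k+2,d-1}B_{k+1}^{d-1}}\leq|L_{\boldsymbol\alpha}(\mathbf z_{k+1})|\cdot|\underline{\mathbf z_{k+1}}|^{d-1}\leq\dfrac{3}{2D_{k+2,d-1}B_{k+1}^{d-1}}$; (iii) for any $\mathbf z\in\mathbb Z^d$ which is not a multiple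 of $\mathbf z_{k+1}$, is different from $\pm\mathbf z_{k+2}$, and satisfies $|\underline{\mathbf z_{k+1}}|\leq|\underline{\mathbf z}|\leq|\underline{\mathbf z_{k+2}}|$, we have \[|L_{\boldsymbol\alpha}(\mathbf z)|\cdot|\underline{\mathbf z}|^{d-1}\geq\min\Big(\frac{1}{2D_{k+1,d-1}},\ \frac{D_{k+1,2}^{d-1}}{2D_{k+2,d-1}B_{k+1}^{d-1}}\Big).\]
   Context: $|\cdot|$ is the Euclidean norm, $\langle\cdot,\cdot\rangle$ the standard inner product. For $\mathbf x=(x_1,\dots,x_d)\in\mathbb R^d$ write $\underline{\mathbf x}=(x_1,\dots,x_{d-1})$. Let $\pi_d=\{\mathbf x\in\mathbb R^d:x_d=1\}$ and $L_{\boldsymbol\alpha}(\mathbf x)=\langle\boldsymbol\alpha,\mathbf x\rangle$ for $\boldsymbol\alpha\in\pi_d$. For given vectors $\mathbf z_1,\mathbf z_2,\dots\in\mathbb Z^d$: $\det\underline\Lambda_{k,l}=|\underline{\mathbf z_k}\wedge\dots\wedge\underline{\mathbf z_{k+l-1}}|$ ($1\le l\le d-1$); $D_{k,l}=\det\underline\Lambda_{k,l}/|\underline{\mathbf z_k}|^l$; $B_k=|\underline{\mathbf z_{k+1}}|/|\underline{\mathbf z_k}|$; $R_k=1/(2|\underline{\mathbf z_{k+1}}|\det\underline\Lambda_{k,d-1})$; when $\underline{\mathbf z_k},\dots,\underline{\mathbf z_{k+d-2}}$ are linearly independent, $\boldsymbol\alpha_k$ is the unique point of $\pi_d$ orthogonal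 to $\mathbf z_k,\dots,\mathbf z_{k+d-2}$ and $\mathfrak S_k=\{\mathbf x\in\pi_d:|\mathbf x-\boldsymbol\alpha_k|\le R_k\}$, a closed ball in the affine hyperplane $\pi_d$, whose interior $\operatorname{int}\mathfrak S_k$ is taken relative to $\pi_d$. The quantities $B_{k+2}$, $R_{k+2}$, $\mathfrak S_{k+2}$ involve $\mathbf z_{k+d+1}$, which is assumed given. Whenever $\boldsymbol\alpha_k$ or $\mathfrak S_k$ appears it is implicitly assumed well defined. *)

From HB Require Import structures.
From mathcomp Require Import all_boot all_order all_algebra.
Set Implicit Arguments. Unset Strict Implicit. Unset Printing Implicit Defensive.
Import Order.TTheory GRing.Theory Num.Theory.
Local Open Scope ring_scope.

Section Defs.
Variable R : rcfType.

Definition vnorm (m : nat) (v : 'rV[R]_m) : R := Num.sqrt (\sum_i v 0 i ^+ 2).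
Definition dotp (m : nat) (u v : 'rV[R]_m) : R := \sum_i u 0 i * v 0 i.

Definition toR (d : nat) (z : 'rV[int]_d) : 'rV[R]_d := map_mx intr z.

Definition under (d : nat) (x : 'rV[R]_d) : 'rV[R]_(d.-1) :=
  \row_(i < d.-1) x 0 (widen_ord (leq_pred d) i).

(* |v_1 /\ ... /\ v_l| for the rows v_i of M, via the Gram determinant *)
Definition wedge_norm (l m : nat) (M : 'M[R]_(l, m)) : R :=
  Num.sqrt (\det (M *m M^T)).

Variable d : nat.
Variable z : nat -> 'rV[int]_d.

Definition uz (k : nat) : 'rV[R]_(d.-1) := under (toR (z k)).

Definition LamMx (k l : nat) : 'M[R]_(l, d.-1) := \matrix_(i < l) uz (k + i).

Definition detLam (k l : nat) : R := wedge_norm (LamMx k l).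
Definition Dkl (k l : nat) : R := detLam k l / vnorm (uz k) ^+ l.
Definition Bk (k : nat) : R := vnorm (uz k.+1) / vnorm (uz k).
Definition Rk (k : nat) : R := 1 / (2 * vnorm (uz k.+1) * detLam k (d - 1)).

Definition in_pi (x : 'rV[R]_d) : Prop :=
  forall i : 'I_d, val i = d.-1 -> x 0 i = 1.

Definition is_alpha (k : nat) (a : 'rV[R]_d) : Prop :=
  in_pi a /\ forall j, (j < d - 1)%N -> dotp a (toR (z (k + j))) = 0.

Definition in_S (k : nat) (a x : 'rV[R]_d) : Prop :=
  in_pi x /\ vnorm (x - a) <= Rk k.
Definition in_intS (k : nat) (a x : 'rV[R]_d) : Prop :=
  in_pi x /\ vnorm (x - a) < Rk k.

Definition L (a : 'rV[R]_d) (x : 'rV[int]_d) : R := dotp a (toR x).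

End Defs.

Definition is_Zbasis (d : nat) (z : nat -> 'rV[int]_d) (k : nat) : Prop :=
  forall v : 'rV[int]_d, exists! c : 'rV[int]_d,
    v = \sum_(i < d) c 0 i *: z (k.+1 + i)%N.

(* Write w = c_1 z_{k+1} + ... + c_d z_{k+d}.  Since alpha_{k+1} is orthogonal to
   z_{k+1}, ..., z_{k+d-1} and alpha_{k+2} to z_{k+2}, ..., z_{k+d}, we get
   L_{alpha_{k+1}}(w) = c_d L_{alpha_{k+1}}(z_{k+d}) and
   L_{alpha_{k+2}}(w) = c_1 L_{alpha_{k+2}}(z_{k+1}), and Cramer's rule in the unimodular basis
   gives |L_{alpha_{k+1}}(z_{k+d})| = 1 / det Lambda_{k+1,d-1} and
   |L_{alpha_{k+2}}(z_{k+1})| = 1 / det Lambda_{k+2,d-1}.  The radii of S_{k+1} and S_{k+2} keep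
   L_alpha(w) within half of these values of L_{alpha_{k+1}}(w) and L_{alpha_{k+2}}(w) when
   |w| <= |z_{k+2}|, so |L_alpha(w)| is large as soon as c_d <> 0 (or c_1 <> 0, for (iii)).
   If c_d = 0 and m < d is the largest index with c_m <> 0, and m >= 3, then |w| is at least the
   distance from z_{k+m} to the span of z_{k+1}, ..., z_{k+m-1}, which is
   det Lambda_{k+1,m} / det Lambda_{k+1,m-1} > |z_{k+2}|.
   So the remaining short vectors lie in the plane of z_{k+1} and z_{k+2}, where the obtuse angle
   and the sign condition on alpha settle the last cases. *)

From HB Require Import structures.
From mathcomp Require Import all_boot all_order all_algebra.
From mathcomp Require Import ring lra zify.
Import Order.TTheory GRing.Theory Num.Theory.
Local Open Scope ring_scope.
Set Implicit Arguments. Unset Strict Implicit. Unset Printing Implicit Defensive.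

Section InnerProduct.
Variables (R : rcfType) (m : nat).
Implicit Types (u v w : 'rV[R]_m) (t : R).

Lemma dotp_mx u v : dotp u v = (u *m v^T) 0 0.
Proof. by rewrite mxE; apply: eq_bigr => i _; rewrite mxE. Qed.

Lemma dotpC u v : dotp u v = dotp v u.
Proof. by apply: eq_bigr => i _; rewrite mulrC. Qed.

Lemma dotpDl u v w : dotp (u + v) w = dotp u w + dotp v w.
Proof. by rewrite !dotp_mx mulmxDl mxE. Qed.

Lemma dotpBl u v w : dotp (u - v) w = dotp u w - dotp v w.
Proof. by rewrite !dotp_mx mulmxBl !mxE. Qed.

Lemma dotpZl t u v : dotp (t *: u) v = t * dotp u v.
Proof. by rewrite !dotp_mx -scalemxAl mxE. Qed.

Lemma dotpDr u v w : dotp u (v + w) = dotp u v + dotp u w.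
Proof. by rewrite dotpC dotpDl !(dotpC u). Qed.

Lemma dotpZr t u v : dotp u (t *: v) = t * dotp u v.
Proof. by rewrite dotpC dotpZl dotpC. Qed.

Lemma dotp0l v : dotp 0 v = 0.
Proof. by rewrite -(scale0r 0) dotpZl mul0r. Qed.

Lemma vnormE v : vnorm v = Num.sqrt (dotp v v).
Proof. by congr Num.sqrt; apply: eq_bigr => i _; rewrite expr2. Qed.

Lemma dotp_ge0 v : 0 <= dotp v v.
Proof. by apply: sumr_ge0 => i _; rewrite -expr2 sqr_ge0. Qed.

Lemma dotp_eq0 v : (dotp v v == 0) = (v == 0).
Proof.
apply/idP/eqP => [/eqP v0|->]; last by rewrite /dotp big1 // => i _; rewrite mxE mul0r.
apply/rowP => i; rewrite mxE; apply/eqP; rewrite -sqrf_eq0 expr2.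
by apply/eqP; move: v0 => /psumr_eq0P; apply=> // j _; rewrite -expr2 sqr_ge0.
Qed.

Lemma vnorm_ge0 v : 0 <= vnorm v.
Proof. exact: sqrtr_ge0. Qed.

Lemma vnorm_sq v : vnorm v ^+ 2 = dotp v v.
Proof. by rewrite vnormE sqr_sqrtr ?dotp_ge0. Qed.

Lemma vnorm_gt0 v : (0 < vnorm v) = (v != 0).
Proof. by rewrite vnormE sqrtr_gt0 lt_def dotp_ge0 dotp_eq0 andbT. Qed.

Lemma normr_dotp_le u v : `|dotp u v| <= vnorm u * vnorm v.
Proof.
have [-> | u0] := eqVneq u 0; first by rewrite dotp0l normr0 mulr_ge0 ?vnorm_ge0.
set A := dotp u u; set B := dotp u v; set C := dotp v v.
have A0 : 0 < A by rewrite lt_def dotp_eq0 u0 dotp_ge0.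
have : 0 <= dotp (A *: v - B *: u) (A *: v - B *: u) by exact: dotp_ge0.
rewrite !dotpBl !dotpZl ![dotp _ (_ - _)]dotpC !dotpBl !dotpZl (dotpC v u) -/A -/B -/C.
have -> : A * (A * C - B * B) - B * (A * B - B * A) = A * (A * C - B ^+ 2) by ring.
rewrite pmulr_rge0 // subr_ge0 => BAC.
rewrite -ler_sqr ?nnegrE ?mulr_ge0 ?vnorm_ge0 // real_normK ?num_real //.
by rewrite exprMn !vnorm_sq.
Qed.
End InnerProduct.

Section Coordinates.
Variables (R : rcfType) (d : nat).
Implicit Types (x y : 'rV[int]_d) (p : int).

Lemma toRD x y : toR R (x + y) = toR R x + toR R y.
Proof. exact: map_mxD. Qed.

Lemma toRZ p x : toR R (p *: x) = p%:~R *: toR R x.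
Proof. exact: map_mxZ. Qed.

Lemma underD (u v : 'rV[R]_d) : under (u + v) = under u + under v.
Proof. by apply/rowP => i; rewrite !mxE. Qed.

Lemma underZ (t : R) (u : 'rV[R]_d) : under (t *: u) = t *: under u.
Proof. by apply/rowP => i; rewrite !mxE. Qed.

Lemma LD (a : 'rV[R]_d) x y : L a (x + y) = L a x + L a y.
Proof. by rewrite /L toRD dotpDr. Qed.

Lemma LZ (a : 'rV[R]_d) p x : L a (p *: x) = p%:~R * L a x.
Proof. by rewrite /L toRZ dotpZr. Qed.

Lemma L_sum (I : finType) (a : 'rV[R]_d) (c : I -> int) (v : I -> 'rV[int]_d) :
  L a (\sum_i c i *: v i) = \sum_i (c i)%:~R * L a (v i).
Proof.
have L0 : L a (0 : 'rV[int]_d) = 0 by rewrite /L /toR map_mx0 dotpC dotp0l.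
by rewrite (big_morph (L a) (LD a) L0); apply: eq_bigr => i _; rewrite LZ.
Qed.

Lemma under_toR_sum (I : finType) (c : I -> int) (v : I -> 'rV[int]_d) :
  under (toR R (\sum_i c i *: v i)) = \sum_i (c i)%:~R *: under (toR R (v i)).
Proof.
have u0 : under (toR R (0 : 'rV[int]_d)) = 0 by apply/rowP => i; rewrite !mxE.
have uD x y : under (toR R (x + y)) = under (toR R x) + under (toR R y).
  by rewrite toRD underD.
by rewrite (big_morph _ uD u0); apply: eq_bigr => i _; rewrite toRZ underZ.
Qed.

End Coordinates.

Section LastCoordinate.
Variables (R : rcfType) (m : nat).

Lemma dotp_under (u v : 'rV[R]_m.+1) :
  dotp u v = dotp (under u) (under v) + u 0 ord_max * v 0 ord_max.
Proof.
rewrite /dotp big_ord_recr; congr (_ + _); apply: eq_bigr => i _.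
by rewrite !mxE; congr (u 0 _ * v 0 _); apply: val_inj.
Qed.

Lemma vnorm_under (u : 'rV[R]_m.+1) : u 0 ord_max = 0 -> vnorm u = vnorm (under u).
Proof. by move=> u0; rewrite !vnormE dotp_under u0 mul0r addr0. Qed.

Lemma L_dist_le (x a : 'rV[R]_m.+1) (w : 'rV[int]_m.+1) : in_pi x -> in_pi a ->
  `|L x w - L a w| <= vnorm (x - a) * vnorm (under (toR R w)).
Proof.
move=> x1 a1; have xa0 : (x - a) 0 ord_max = 0 by rewrite !mxE x1 ?a1 ?subrr.
rewrite /L -dotpBl dotp_under xa0 mul0r addr0 (vnorm_under xa0).
exact: normr_dotp_le.
Qed.

End LastCoordinate.

Section GramDeterminant.
Variables (R : rcfType) (m p : nat).
Implicit Types (M : 'M[R]_(m, p)) (x : 'rV[R]_p).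

Definition gram q (A : 'M[R]_(q, p)) : 'M[R]_q := A *m A^T.

Definition perp M x : 'rV[R]_p := x - x *m M^T *m invmx (gram M) *m M.

Lemma gram_unitmx M : row_free M -> gram M \in unitmx.
Proof.
move=> freeM; rewrite -row_free_unit; apply/inj_row_free => v vG0.
apply: (row_free_inj freeM); rewrite mul0mx; apply/eqP; rewrite -dotp_eq0 dotp_mx.
by rewrite trmx_mul !mulmxA -(mulmxA v) vG0 !mul0mx mxE.
Qed.

Lemma perp_orth M x : row_free M -> perp M x *m M^T = 0.
Proof. by move=> freeM; rewrite mulmxBl -[_ *m M *m _]mulmxA mulmxKV ?gram_unitmx ?subrr. Qed.

Lemma det_gram_col_mx M x : row_free M ->
  \det (gram (col_mx M x)) = \det (gram M) * dotp (perp M x) (perp M x).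
Proof.
move=> freeM; set c := x *m M^T *m invmx (gram M).
set E : 'M[R]_(m + 1) := block_mx 1%:M 0 (- c) 1%:M.
have detE : \det E = 1 by rewrite det_lblock !det1 mulr1.
have EM : E *m col_mx M x = col_mx M (perp M x).
  by rewrite mul_block_col !mul1mx mul0mx addr0 mulNmx addrC.
have -> : \det (gram (col_mx M x)) = \det (gram (col_mx M (perp M x))).
  by rewrite -EM /gram trmx_mul mulmxA -(mulmxA E) !det_mulmx det_tr detE mul1r mulr1.
by rewrite /gram tr_col_mx mul_col_row perp_orth // det_ublock det_mx11 dotp_mx.
Qed.

Lemma gram_height M x (b : 'rV[R]_m) (t : R) : row_free M -> 0 <= \det (gram M) ->
  t ^+ 2 * \det (gram (col_mx M x))
    <= dotp (b *m M + t *: x) (b *m M + t *: x) * \det (gram M).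
Proof.
move=> freeM G0; set y := perp M x; set q := (b + t *: (x *m M^T *m invmx (gram M))) *m M.
have <- : q + t *: y = b *m M + t *: x.
  by rewrite /q /y /perp mulmxDl -scalemxAl scalerBr addrCA addrK addrC.
have qy : dotp q y = 0 by rewrite dotpC dotp_mx trmx_mul mulmxA perp_orth // mul0mx mxE.
rewrite det_gram_col_mx // -/y mulrCA [X in _ <= X]mulrC ler_wpM2l //.
have := dotp_ge0 q; clearbody y q.
by rewrite !(dotpDl, dotpDr, dotpZl, dotpZr) qy (dotpC y) qy; lra.
Qed.

Lemma gram_det_gt0 M x : row_free M ->
  0 < \det (gram (col_mx M x)) -> 0 < \det (gram M).
Proof.
move=> freeM; rewrite det_gram_col_mx //; have := dotp_ge0 (perp M x); nra.
Qed.

End GramDeterminant.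

Lemma row_free_col_mx_l (R : fieldType) m1 m2 n (A : 'M[R]_(m1, n)) (B : 'M_(m2, n)) :
  row_free (col_mx A B) -> row_free A.
Proof.
move=> freeAB; apply/inj_row_free => v vA0.
have /(row_free_inj freeAB) : row_mx v 0 *m col_mx A B = 0 *m col_mx A B.
  by rewrite mul_row_col vA0 !mul0mx addr0.
by rewrite -row_mx0 => /eq_row_mx[].
Qed.

Lemma cramer_cofactor (R : comRingType) n (A : 'M[R]_n.+1) (a : 'cV[R]_n.+1) j :
  a ord_max 0 = 1 -> (forall i, i != j -> (A *m a) i 0 = 0) ->
  (A *m a) j 0 * cofactor A j ord_max = \det A.
Proof.
move=> a1 Aa0; have := congr1 (fun B : 'cV[R]_n.+1 => B ord_max 0) (mulmxA (\adj A) A a).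
rewrite mul_adj_mx mul_scalar_mx [X in _ = X -> _]mxE a1 mulr1 mxE (bigD1 j) //= big1 ?addr0.
  by move=> <-; rewrite [\adj A _ _]mxE mulrC.
by move=> i /Aa0 ->; rewrite mulr0.
Qed.

Section LatticeBasis.
Variables (R : rcfType) (n : nat) (z : nat -> 'rV[int]_n.+1).

Lemma LamMx_addn1 k m : LamMx R z k (m + 1) = col_mx (LamMx R z k m) (uz R z (k + m)).
Proof.
apply/matrixP => i j; rewrite !mxE.
by case: splitP => [i' ei | i' ei]; rewrite !mxE ei ?ord1 ?addn0.
Qed.

Lemma row_free_LamMx_le k m l : (m <= l)%N ->
  row_free (LamMx R z k l) -> row_free (LamMx R z k m).
Proof.
move=> /subnK <-; elim: (l - m)%N => [|j IH] //.
by rewrite addSn -addn1 LamMx_addn1 => /row_free_col_mx_l.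
Qed.

Definition basis_mx k : 'M[R]_n.+1 := \matrix_(i < n.+1) toR R (z (k.+1 + i)%N).

Lemma basis_mxE k (a : 'rV[R]_n.+1) i : (basis_mx k *m a^T) i 0 = L a (z (k.+1 + i)%N).
Proof. by rewrite mxE /L dotpC; apply: eq_bigr => j _; rewrite !mxE. Qed.

Lemma det_basis_mx k : is_Zbasis z k -> `|\det (basis_mx k)| = 1.
Proof.
move=> basis_z; set Z : 'M[int]_n.+1 := \matrix_(i < n.+1) z (k.+1 + i)%N.
have -> : basis_mx k = map_mx intr Z by apply/matrixP => i j; rewrite !mxE.
have coord j : exists c : 'rV[int]_n.+1, delta_mx 0 j == \sum_i c 0 i *: z (k.+1 + i)%N.
  by have [c [/eqP ? _]] := basis_z (delta_mx 0 j); exists c.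
have : \det (\matrix_j xchoose (coord j)) * \det Z = 1.
  rewrite -det_mulmx -(det1 _ n.+1); congr (\det _); apply/row_matrixP => j.
  rewrite row_mul rowK row1 mulmx_sum_row; apply/esym.
  by apply: etrans (eqP (xchooseP (coord j))) _; apply: eq_bigr => i _; rewrite rowK.
move/intUnitRing.unitzPl; rewrite det_map_mx qualifE => /orP[] /eqP ->.
  by rewrite rmorph1 normr1.
by rewrite rmorphN rmorph1 normrN normr1.
Qed.

Lemma wedge_norm_square q (M : 'M[R]_q) : wedge_norm M = `|\det M|.
Proof. by rewrite /wedge_norm det_mulmx det_tr -expr2 sqrtr_sqr. Qed.

Lemma normr_cofactor_basis k (i : 'I_n.+1) (a : 'rV[R]_n.+1) : is_Zbasis z k -> in_pi a ->
  (forall j, j != i -> L a (z (k.+1 + j)%N) = 0) ->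
  `|L a (z (k.+1 + i)%N)| * `|\det (row' i (col' ord_max (basis_mx k)))| = 1.
Proof.
move=> basis_z a1 a0; rewrite -(det_basis_mx basis_z).
rewrite -(cramer_cofactor (a := a^T) (j := i)) ?basis_mxE ?mxE ?a1 //.
  by rewrite normrM /cofactor normrM normr_sign mul1r.
by move=> j /a0; rewrite basis_mxE.
Qed.

Lemma normL_alpha_next k (a : 'rV[R]_n.+1) : is_Zbasis z k -> is_alpha z k.+2 a ->
  `|L a (z k.+1)| * detLam R z k.+2 n = 1.
Proof.
move=> basis_z [a1 a0]; rewrite -{1}[k.+1]addn0 /detLam wedge_norm_square.
have -> : LamMx R z k.+2 n = row' 0 (col' ord_max (basis_mx k)).
  apply/matrixP => i j; rewrite !mxE lift0 addSnnS; congr ((z _ 0 _)%:~R).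
  exact/val_inj/esym/lift_max.
apply: (normr_cofactor_basis (i := 0)) => // j; case: (unliftP 0 j) => [j' -> _|->] //.
by rewrite lift0 -addSnnS /L a0 //= subn1.
Qed.

Lemma normL_alpha_last k (a : 'rV[R]_n.+1) : is_Zbasis z k -> is_alpha z k.+1 a ->
  `|L a (z (k.+1 + n)%N)| * detLam R z k.+1 n = 1.
Proof.
move=> basis_z [a1 a0]; rewrite /detLam wedge_norm_square.
have -> : LamMx R z k.+1 n = row' ord_max (col' ord_max (basis_mx k)).
  apply/matrixP => i j; rewrite !mxE lift_max; congr ((z _ 0 _)%:~R).
  exact/val_inj/esym/lift_max.
apply: (normr_cofactor_basis (i := ord_max)) => // j.
case: (unliftP ord_max j) => [j' -> _|->]; last by rewrite eqxx.
by rewrite lift_max /L a0 // subn1.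
Qed.
End LatticeBasis.

Lemma intr_norm_ge1 (R : numDomainType) (p : int) : p != 0 -> 1 <= `|p%:~R : R|.
Proof. by move=> p0; rewrite -intr_norm ler1z -gtz0_ge1 normr_gt0. Qed.

Lemma intr_norm_ge2 (R : numDomainType) (p : int) : 2 <= `|p| -> 2 <= `|p%:~R : R|.
Proof. by rewrite -intr_norm -(ler_int R). Qed.

Lemma intr_sqr_ge1 (R : realDomainType) (p : int) : p != 0 -> 1 <= (p%:~R : R) ^+ 2.
Proof. by move=> p0; rewrite -real_normK ?num_real // exprn_ege1 // intr_norm_ge1. Qed.

Lemma int_mul_self_le0 (p : int) : p * p <= 0 -> p = 0.
Proof. nia. Qed.

Lemma int_mul_self_le1 (p : int) : p != 0 -> p * p <= 1 -> p = 1 \/ p = -1.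
Proof. nia. Qed.

Lemma int_norm_lt2 (p : int) : p != 0 -> `|p| < 2 -> p = 1 \/ p = -1.
Proof. lia. Qed.

Lemma lerB_dist_scaled (R : realDomainType) (x y K : R) : 0 <= K ->
  `|x - y| * K <= 1 -> `|y| * K - 1 <= `|x| * K.
Proof. move=> K0; have := lerB_dist y x; rewrite distrC; nra. Qed.

Section LinearFormBounds.
(* The dimension is d = n + 3, so d - 1 = n.+2 and z (k.+1 + n.+2) is z_{k+d}. *)
Variables (R : rcfType) (n k : nat) (z : nat -> 'rV[int]_n.+3) (a1 a2 alpha : 'rV[R]_n.+3).

Local Notation ulen w := (vnorm (under (toR R w))).
Local Notation n1 := (vnorm (uz R z k.+1)).
Local Notation n2 := (vnorm (uz R z k.+2)).
Local Notation n3 := (vnorm (uz R z k.+3)).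
Local Notation D1 := (detLam R z k.+1 n.+2).
Local Notation D2 := (detLam R z k.+2 n.+2).
Local Notation l1 := (L a1 (z (k.+1 + n.+2)%N)).
Local Notation l2 := (L a2 (z k.+1)).
Local Notation lam1 := (L alpha (z k.+1)).
Local Notation lam2 := (L alpha (z k.+2)).

Hypothesis basis_z : is_Zbasis z k.
Hypothesis alpha1 : is_alpha z k.+1 a1.
Hypothesis alpha2 : is_alpha z k.+2 a2.
Hypothesis free1 : row_free (LamMx R z k.+1 n.+2).
Hypothesis n12 : n1 <= n2.
Hypothesis n23 : n2 <= n3.
Hypothesis obtuse12 : dotp (uz R z k.+1) (uz R z k.+2) <= 0.
Hypothesis growth : forall m, (2 <= m)%N -> (m < n.+2)%N ->
  n2 * detLam R z k.+1 m < detLam R z k.+1 m.+1.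
Hypothesis inS1 : in_S z k.+1 a1 alpha.
Hypothesis inS2 : in_intS z k.+2 a2 alpha.
Hypothesis sign2 : 0 <= lam2 * l2.

Lemma l1D1 : `|l1| * D1 = 1.
Proof. exact: normL_alpha_last. Qed.

Lemma l2D2 : `|l2| * D2 = 1.
Proof. exact: normL_alpha_next. Qed.

Lemma D1_gt0 : 0 < D1.
Proof.
have D0 : 0 <= D1 := sqrtr_ge0 _.
by rewrite lt_def D0 andbT; apply: contra_eqN l1D1 => /eqP->; rewrite mulr0 eq_sym oner_eq0.
Qed.

Lemma D2_gt0 : 0 < D2.
Proof.
have D0 : 0 <= D2 := sqrtr_ge0 _.
by rewrite lt_def D0 andbT; apply: contra_eqN l2D2 => /eqP->; rewrite mulr0 eq_sym oner_eq0.
Qed.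

Lemma n1_gt0 : 0 < n1.
Proof.
rewrite vnorm_gt0; apply/eqP => u0.
have : delta_mx 0 0 = 0 :> 'rV[R]_n.+2.
  by apply: (row_free_inj free1); rewrite /= -rowE rowK addn0 u0 mul0mx.
by move/matrixP/(_ 0 0)/eqP; rewrite !mxE oner_eq0.
Qed.

Lemma n2_gt0 : 0 < n2.
Proof. exact: lt_le_trans n1_gt0 n12. Qed.

Lemma n3_gt0 : 0 < n3.
Proof. exact: lt_le_trans n2_gt0 n23. Qed.

Lemma L_alpha_near_a1 w : `|L alpha w - L a1 w| * (2 * D1) * n2 <= ulen w.
Proof.
have K0 : 0 < 2 * D1 * n2 by rewrite !mulr_gt0 ?D1_gt0 ?n2_gt0.
have := L_dist_le w inS1.1 alpha1.1; have := vnorm_ge0 (under (toR R w)).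
have : vnorm (alpha - a1) * (2 * D1 * n2) <= 1.
  by rewrite -ler_pdivlMr // mulrAC; case: inS1.
nra.
Qed.

Lemma L_alpha_near_a2_lt w : 0 < ulen w -> `|L alpha w - L a2 w| * (2 * D2) * n3 < ulen w.
Proof.
have K0 : 0 < 2 * D2 * n3 by rewrite !mulr_gt0 ?D2_gt0 ?n3_gt0.
move=> uw0; have := L_dist_le w inS2.1 alpha2.1.
have : vnorm (alpha - a2) * (2 * D2 * n3) < 1.
  by rewrite -ltr_pdivlMr // mulrAC; case: inS2.
have := vnorm_ge0 (alpha - a2); nra.
Qed.

Lemma L_alpha_near_a2 w : `|L alpha w - L a2 w| * (2 * D2) * n3 <= ulen w.
Proof.
have := vnorm_ge0 (under (toR R w)); rewrite le_eqVlt => /predU1P[u0|/L_alpha_near_a2_lt/ltW //].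
have := L_dist_le w inS2.1 alpha2.1; rewrite -u0 mulr0 normr_le0 => /eqP->.
by rewrite normr0 !mul0r.
Qed.

Lemma L_a2_z2 : L a2 (z k.+2) = 0.
Proof. by have := alpha2.2 0%N isT; rewrite addn0. Qed.

Lemma L_a1_z1 : L a1 (z k.+1) = 0.
Proof. by have := alpha1.2 0%N isT; rewrite addn0. Qed.

Lemma lam1_D1 : `|lam1| * (2 * D1) <= 1.
Proof.
have := L_alpha_near_a1 (z k.+1); rewrite L_a1_z1 subr0 => h.
by rewrite -(ger_pMl _ n2_gt0) (le_trans h n12).
Qed.

Lemma lam1_l2 : `|lam1 - l2| * (2 * D2) <= 1.
Proof.
rewrite -(ger_pMl _ n3_gt0) ltW // (lt_le_trans (L_alpha_near_a2_lt n1_gt0)) //.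
exact: le_trans n12 n23.
Qed.

Lemma lam2_D2 : `|lam2| * (2 * D2) < 1.
Proof.
have := L_alpha_near_a2_lt n2_gt0; rewrite L_a2_z2 subr0 => h.
by rewrite -(gtr_pMl _ n3_gt0) (lt_le_trans h n23).
Qed.

Lemma lam1_D2 : 1 / 2 <= `|lam1| * D2 <= 3 / 2.
Proof.
have := lam1_l2; have := l2D2; have := D2_gt0.
have := lerB_dist lam1 l2; have := lerB_dist l2 lam1; rewrite (distrC l2).
move=> *; apply/andP; split; nra.
Qed.

Lemma L_a1_coord (c : 'rV[int]_n.+3) w : w = \sum_i c 0 i *: z (k.+1 + i)%N ->
  L a1 w = (c 0 ord_max)%:~R * l1.
Proof.
move=> ->; rewrite L_sum big_ord_recr /= big1 ?add0r // => i _.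
by rewrite /L alpha1.2 ?mulr0 //= subn1.
Qed.

Lemma under_coord_trunc (c : 'rV[int]_n.+3) w m : (m < n.+3)%N ->
  w = \sum_i c 0 i *: z (k.+1 + i)%N ->
  (forall i : 'I_n.+3, (m < i)%N -> c 0 i = 0) ->
  under (toR R w) = (\row_(i < m) (c 0 (inord i))%:~R) *m LamMx R z k.+1 m
                    + (c 0 (inord m))%:~R *: uz R z (k.+1 + m).
Proof.
move=> mn -> c0; rewrite under_toR_sum mulmx_sum_row.
pose F i := (c 0 (inord i))%:~R *: uz R z (k.+1 + i).
rewrite (eq_bigr (F \o val)) => [|i _]; last by rewrite /F /= inord_val.
rewrite (bigID (fun i : 'I_n.+3 => (i < m.+1)%N)) /= [X in _ + X]big1 ?addr0; last first.
  by move=> i; rewrite -leqNgt => /c0; rewrite /F /= inord_val => ->; rewrite scale0r.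
rewrite -(big_ord_widen _ F mn) big_ord_recr /=; congr (_ + _).
by apply: eq_bigr => i _; rewrite rowK mxE.
Qed.

Lemma n2_lt_ulen_of_high_coord (c : 'rV[int]_n.+3) w m : (2 <= m)%N -> (m < n.+2)%N ->
  w = \sum_i c 0 i *: z (k.+1 + i)%N ->
  (forall i : 'I_n.+3, (m < i)%N -> c 0 i = 0) -> c 0 (inord m) != 0 ->
  n2 < ulen w.
Proof.
move=> m2 mn ew c0 cm; set M := LamMx R z k.+1 m; set x := uz R z (k.+1 + m).
have freeM : row_free M := row_free_LamMx_le (ltnW mn) free1.
set G0 := \det (gram M); set G1 := \det (gram (col_mx M x)).
have grow : n2 * Num.sqrt G0 < Num.sqrt G1.
  by rewrite /G1 /x -LamMx_addn1 addn1; exact: growth.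
have grow0 : 0 <= n2 * Num.sqrt G0 by rewrite mulr_ge0 ?sqrtr_ge0 ?vnorm_ge0.
have G1_gt0 : 0 < G1 by rewrite -sqrtr_gt0 (le_lt_trans grow0 grow).
have G0_gt0 : 0 < G0 := gram_det_gt0 freeM G1_gt0.
have := gram_height x (\row_(i < m) (c 0 (inord i))%:~R) (c 0 (inord m))%:~R
  freeM (ltW G0_gt0).
rewrite -(under_coord_trunc (leqW mn) ew c0) -/G1 -vnorm_sq => height.
have grow2 : n2 ^+ 2 * G0 < G1.
  rewrite -(sqr_sqrtr (ltW G0_gt0)) -(sqr_sqrtr (ltW G1_gt0)) -exprMn.
  by rewrite ltr_sqr ?nnegrE ?sqrtr_ge0.
have : n2 ^+ 2 < ulen w ^+ 2.
  rewrite -(ltr_pM2r G0_gt0) (lt_le_trans grow2) // (le_trans _ height) //.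
  by rewrite ler_peMl ?(ltW G1_gt0) ?intr_sqr_ge1.
have := vnorm_ge0 (under (toR R w)); have := n2_gt0; nra.
Qed.

Lemma coord_in_plane (c : 'rV[int]_n.+3) w : ulen w <= n2 ->
  w = \sum_i c 0 i *: z (k.+1 + i)%N -> c 0 ord_max = 0 ->
  w = c 0 0 *: z k.+1 + c 0 (inord 1) *: z k.+2.
Proof.
move=> small ew clast.
have high (i : 'I_n.+3) : (2 <= i)%N -> c 0 i = 0.
  move=> i2; apply/eqP/negPn/negP => ci.
  pose P j := (2 <= j < n.+3)%N && (c 0 (inord j) != 0).
  have exP : exists j, P j by exists i; rewrite /P i2 ltn_ord inord_val.
  have ubP j : P j -> (j <= n.+2)%N by case/andP => /andP[].
  have [m /andP[/andP[m2 m3] cm] mmax] := ex_maxnP exP ubP.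
  have mn : (m < n.+2)%N.
    rewrite ltn_neqAle -ltnS m3 andbT; apply: contraNneq cm => ->.
    have -> : inord n.+2 = ord_max :> 'I_n.+3 by apply: val_inj; rewrite /= inordK.
    by rewrite clast.
  have c0 (j : 'I_n.+3) : (m < j)%N -> c 0 j = 0.
    move=> mj; apply/eqP/negPn/negP => cj; move: (mmax j).
    by rewrite /P inord_val cj (leq_trans m2 (ltnW mj)) ltn_ord leqNgt mj => /(_ isT).
  by have := n2_lt_ulen_of_high_coord m2 mn ew c0 cm; rewrite ltNge small.
rewrite ew 2!big_ord_recl big1 ?addr0 => [|i _]; last by rewrite high ?scale0r.
have -> : lift ord0 ord0 = inord 1 :> 'I_n.+3 by apply: val_inj; rewrite /= inordK.
by rewrite /= addn0 inordK // addn1.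
Qed.

Lemma lower_bound_or_plane w : ulen w <= n2 ->
  1 <= `|L alpha w| * (2 * D1) \/ exists p q : int, w = p *: z k.+1 + q *: z k.+2.
Proof.
move=> small; have [c [ew _]] := basis_z w.
have [clast|clast] := eqVneq (c 0 ord_max) 0.
  by right; exists (c 0 0), (c 0 (inord 1)); exact: coord_in_plane.
left; have := L_alpha_near_a1 w; rewrite (L_a1_coord ew) => near.
have {}near : `|L alpha w - (c 0 ord_max)%:~R * l1| * (2 * D1) <= 1.
  by rewrite -(ger_pMl _ n2_gt0) (le_trans near small).
apply: le_trans (lerB_dist_scaled _ near); last by rewrite mulr_ge0 ?(ltW D1_gt0).
have := intr_norm_ge1 R clast; rewrite normrM -mulrA [`|l1| * _]mulrCA l1D1 mulr1; lra.
Qed.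

Lemma L_alpha_plane (p q : int) :
  L alpha (p *: z k.+1 + q *: z k.+2) = p%:~R * lam1 + q%:~R * lam2.
Proof. by rewrite LD !LZ. Qed.

Lemma ulen_plane_sq (p q : int) : ulen (p *: z k.+1 + q *: z k.+2) ^+ 2 =
  (p%:~R) ^+ 2 * n1 ^+ 2 + 2 * (p%:~R * q%:~R) * dotp (uz R z k.+1) (uz R z k.+2)
  + (q%:~R) ^+ 2 * n2 ^+ 2.
Proof.
rewrite !vnorm_sq toRD !toRZ underD !underZ.
by rewrite !(dotpDl, dotpDr, dotpZl, dotpZr) (dotpC (uz R z k.+2)); ring.
Qed.

Lemma lower_bound_plane (p q : int) : ulen (p *: z k.+1 + q *: z k.+2) <= n3 ->
  2 * `|p%:~R| - 1 <= `|L alpha (p *: z k.+1 + q *: z k.+2)| * (2 * D2).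
Proof.
move=> small; have := L_alpha_near_a2 (p *: z k.+1 + q *: z k.+2).
rewrite [L a2 _]LD !LZ L_a2_z2 mulr0 addr0 => near.
have {}near : `|L alpha (p *: z k.+1 + q *: z k.+2) - p%:~R * l2| * (2 * D2) <= 1.
  by rewrite -(ger_pMl _ n3_gt0) (le_trans near small).
apply: le_trans (lerB_dist_scaled _ near); last by rewrite mulr_ge0 ?(ltW D2_gt0).
by rewrite normrM -mulrA [`|l2| * _]mulrCA l2D2 mulr1 mulrC.
Qed.

Lemma short_plane_vector (p q : int) : ulen (p *: z k.+1 + q *: z k.+2) <= n2 ->
  p * q <= 0 -> q != 0 -> p = 0 /\ (q = 1 \/ q = -1).
Proof.
move=> small pq q0; have sq := ulen_plane_sq p q.
have {}small : ulen (p *: z k.+1 + q *: z k.+2) ^+ 2 <= n2 ^+ 2.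
  by rewrite ler_sqr ?nnegrE ?vnorm_ge0.
have {}pq : (p%:~R * q%:~R : R) <= 0 by rewrite -intrM lerz0.
have q1 := intr_sqr_ge1 R q0; have := obtuse12 => obtuse.
have p0 : (p%:~R : R) ^+ 2 * n1 ^+ 2 <= 0 by nra.
have {}q1 : ((q%:~R : R) ^+ 2 - 1) * n2 ^+ 2 <= 0 by have := sqr_ge0 (p%:~R : R); nra.
split.
  move: p0; rewrite pmulr_lle0 ?exprn_gt0 ?n1_gt0 // -rmorphXn /= lerz0 expr2.
  exact: int_mul_self_le0.
move: q1; rewrite pmulr_lle0 ?exprn_gt0 ?n2_gt0 // subr_le0 -rmorphXn /= lerz1 expr2.
exact: int_mul_self_le1.
Qed.

Lemma lam1_le_plane (p q : int) : p = 1 \/ p = -1 -> 0 <= p * q ->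
  `|lam1| <= `|L alpha (p *: z k.+1 + q *: z k.+2)|.
Proof.
move=> p1 pq; have l2_gt0 : 0 < `|l2| by have := l2D2; have := D2_gt0; nra.
(* [lam1] lies within [|l2| / 2] of [l2], so it has the sign of [l2], and so does [lam2] *)
have lam1l2 : 0 < lam1 * l2.
  have := lam1_l2; have := l2D2; have := D2_gt0.
  have := real_normK (num_real (lam1 - l2)); have := real_normK (num_real l2).
  have := normr_ge0 (lam1 - l2); nra.
have lam12 : 0 <= lam1 * lam2.
  have := sign2; have := real_normK (num_real l2); nra.
have p2 : (p%:~R : R) ^+ 2 = 1 by case: p1 => ->; rewrite ?rmorphN rmorph1 ?sqrrN expr1n.
have pqR : 0 <= (p%:~R * q%:~R : R) by rewrite -intrM ler0z.
rewrite L_alpha_plane -ler_sqr ?nnegrE ?normr_ge0 // !real_normK ?num_real //.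
have := sqr_ge0 (q%:~R * lam2 : R); nra.
Qed.

Lemma D12_le_plane (p q : int) : q != 0 ->
  detLam R z k.+1 2 <= ulen (p *: z k.+1 + q *: z k.+2) * n1.
Proof.
move=> q0; set M := LamMx R z k.+1 1.
have freeM : row_free M := row_free_LamMx_le (isT : (1 <= n.+2)%N) free1.
have GM : \det (gram M) = n1 ^+ 2.
  by rewrite det_mx11 vnorm_sq dotp_mx /gram !mxE; apply: eq_bigr => i _; rewrite !mxE addn0.
have uw : under (toR R (p *: z k.+1 + q *: z k.+2))
    = \row_(i < 1) p%:~R *m M + q%:~R *: uz R z k.+2.
  by rewrite toRD !toRZ underD !underZ mulmx_sum_row big_ord1 rowK mxE addn0.
have := gram_height (uz R z k.+2) (\row_(i < 1) p%:~R) q%:~R freeM.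
rewrite GM sqr_ge0 -uw -vnorm_sq -/M -[k.+2]addn1 -LamMx_addn1 !addn1 => /(_ isT) height.
rewrite /detLam /wedge_norm; set G := \det _.
have [G0|G0] := lerP G 0; first by rewrite ler0_sqrtr // mulr_ge0 ?vnorm_ge0.
rewrite -(ger0_norm (mulr_ge0 (vnorm_ge0 _) (vnorm_ge0 _))) -sqrtr_sqr ler_sqrt ?sqr_ge0 //.
by rewrite exprMn (le_trans _ height) // ler_peMl ?intr_sqr_ge1 ?ltW.
Qed.

Lemma Dkl_Bk_next : 2 * Dkl R z k.+2 n.+2 * Bk R z k.+1 ^+ n.+2 = 2 * D2 / n1 ^+ n.+2.
Proof.
rewrite /Dkl /Bk expr_div_n; field.
by rewrite !expf_neq0 // gt_eqF ?n1_gt0 ?n2_gt0.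
Qed.

Lemma normL_z1_minimal w : ulen w <= n2 -> w != 0 -> w != z k.+2 -> w != - z k.+2 ->
  `|lam1| <= `|L alpha w| /\ `|lam2| < `|lam1|.
Proof.
move=> small w0 wz2 wNz2; have D2p := D2_gt0; have := lam1_D2 => /andP[lam1_lo lam1_hi].
split; last by have := lam2_D2; nra.
have [big|[p [q ew]]] := lower_bound_or_plane small.
  by have := lam1_D1; have := D1_gt0; nra.
subst w; have [p0|p0] := eqVneq p 0.
  have q0 : q != 0 by apply: contraNneq w0 => q0; rewrite p0 q0 !scale0r addr0.
  have pq : p * q <= 0 by rewrite p0 mul0r.
  have [_ [] q1] := short_plane_vector small pq q0.
    by move: wz2; rewrite p0 q1 scale0r add0r scale1r eqxx.
  by move: wNz2; rewrite p0 q1 scale0r add0r scaleN1r eqxx.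
have [p2|p1] := lerP 2 `|p|.
  have := lower_bound_plane (le_trans small n23); have := intr_norm_ge2 R p2; nra.
have {p0 p1} p1 := int_norm_lt2 p0 p1.
have [pq|pq] := lerP 0 (p * q); first exact: lam1_le_plane.
have q0 : q != 0 by apply: contraTneq pq => ->; rewrite mulr0.
by have [p0 _] := short_plane_vector small (ltW pq) q0; case: p1; rewrite p0.
Qed.

Lemma normL_z1_bounds :
  1 / (2 * Dkl R z k.+2 n.+2 * Bk R z k.+1 ^+ n.+2) <= `|lam1| * n1 ^+ n.+2 /\
  `|lam1| * n1 ^+ n.+2 <= 3 / (2 * Dkl R z k.+2 n.+2 * Bk R z k.+1 ^+ n.+2).
Proof.
have P0 : 0 < n1 ^+ n.+2 by rewrite exprn_gt0 ?n1_gt0.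
have K0 : 0 < 2 * D2 / n1 ^+ n.+2 by rewrite divr_gt0 // mulr_gt0 ?D2_gt0.
have e : `|lam1| * n1 ^+ n.+2 * (2 * D2 / n1 ^+ n.+2) = 2 * (`|lam1| * D2).
  by field; rewrite gt_eqF.
rewrite Dkl_Bk_next ler_pdivrMr // ler_pdivlMr // e.
by have /andP[lo hi] := lam1_D2; split; lra.
Qed.

Lemma normL_lower_bound w : ~ (exists m : int, w = m *: z k.+1) ->
  w != z k.+2 -> w != - z k.+2 -> n1 <= ulen w -> ulen w <= n2 ->
  Num.min (1 / (2 * Dkl R z k.+1 n.+2))
          (Dkl R z k.+1 2 ^+ n.+2 / (2 * Dkl R z k.+2 n.+2 * Bk R z k.+1 ^+ n.+2))
    <= `|L alpha w| * ulen w ^+ n.+2.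
Proof.
move=> notz1 wz2 wNz2 long small; have := D1_gt0; have := D2_gt0; have := n1_gt0.
set U := ulen w ^+ n.+2; set P := n1 ^+ n.+2; move=> n1p D2p D1p.
have P0 : 0 < P by rewrite exprn_gt0.
have PU : P <= U by apply: lerXn2r; rewrite ?nnegrE ?vnorm_ge0.
have U0 : 0 <= U by rewrite exprn_ge0 ?vnorm_ge0.
rewrite Dkl_Bk_next /Dkl ge_min -/P.
have [big|[p [q ew]]] := lower_bound_or_plane small.
  apply/orP; left; have -> : 1 / (2 * (D1 / P)) = P / (2 * D1) by field; rewrite !gt_eqF.
  rewrite ler_pdivrMr ?mulr_gt0 //; have := normr_ge0 (L alpha w); nra.
subst w; have q0 : q != 0.
  by apply/eqP => q0; apply: notz1; exists p; rewrite q0 scale0r addr0.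
have [p0|p0] := eqVneq p 0.
  have pq : p * q <= 0 by rewrite p0 mul0r.
  have [_ [] q1] := short_plane_vector small pq q0; [move: wz2 | move: wNz2];
    by rewrite p0 q1 scale0r add0r ?scale1r ?scaleN1r eqxx.
apply/orP; right; set D12 := detLam R z k.+1 2.
have lo := lower_bound_plane (le_trans small n23); have := intr_norm_ge1 R p0 => p1.
have D12U : (D12 / n1) ^+ n.+2 <= U.
  apply: lerXn2r; rewrite ?nnegrE ?divr_ge0 ?sqrtr_ge0 ?vnorm_ge0 ?ler_pdivrMr //.
  exact: D12_le_plane.
rewrite !expr_div_n -exprM mulnC exprM -/P.
have -> : D12 ^+ n.+2 / P ^+ 2 / (2 * D2 / P) = D12 ^+ n.+2 / P / (2 * D2).
  by field; rewrite !gt_eqF.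
rewrite ler_pdivrMr ?mulr_gt0 // -expr_div_n.
have := normr_ge0 (L alpha (p *: z k.+1 + q *: z k.+2)); nra.
Qed.

End LinearFormBounds.

Unset Implicit Arguments.

Theorem lemma4 (R : rcfType) (d k : nat) (z : nat -> 'rV[int]_d)
  (a1 a2 alpha : 'rV[R]_d) :
  (3 <= d)%N ->
  is_Zbasis z k ->
  vnorm (uz R z k.+1) <= vnorm (uz R z k.+2) ->
  vnorm (uz R z k.+2) <= vnorm (uz R z k.+3) ->
  dotp (uz R z k.+1) (uz R z k.+2) <= 0 ->
  ((4 <= d)%N -> forall n : nat, (3 <= n)%N -> (n <= d - 1)%N ->
     detLam R z k.+1 n > vnorm (uz R z k.+2) * detLam R z k.+1 n.-1) ->
  (* alpha_{k+1}, alpha_{k+2} are well defined and equal to a1, a2 *)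
  row_free (LamMx R z k.+1 (d - 1)) ->
  row_free (LamMx R z k.+2 (d - 1)) ->
  is_alpha z k.+1 a1 ->
  is_alpha z k.+2 a2 ->
  in_S z k.+1 a1 alpha ->
  in_intS z k.+2 a2 alpha ->
  L alpha (z k.+2) * L a2 (z k.+1) >= 0 ->
  (* (i) *)
  (forall w : 'rV[int]_d,
     vnorm (under (toR R w)) <= vnorm (uz R z k.+2) ->
     w != 0 -> w != z k.+2 -> w != - z k.+2 ->
     `|L alpha w| >= `|L alpha (z k.+1)| /\
     `|L alpha (z k.+1)| > `|L alpha (z k.+2)|) /\
  (* (ii) *)
  (1 / (2 * Dkl R z k.+2 (d - 1) * Bk R z k.+1 ^+ (d - 1))
     <= `|L alpha (z k.+1)| * vnorm (uz R z k.+1) ^+ (d - 1)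
   /\ `|L alpha (z k.+1)| * vnorm (uz R z k.+1) ^+ (d - 1)
     <= 3 / (2 * Dkl R z k.+2 (d - 1) * Bk R z k.+1 ^+ (d - 1))) /\
  (* (iii) *)
  (forall w : 'rV[int]_d,
     ~ (exists m : int, w = m *: z k.+1) ->
     w != z k.+2 -> w != - z k.+2 ->
     vnorm (uz R z k.+1) <= vnorm (under (toR R w)) ->
     vnorm (under (toR R w)) <= vnorm (uz R z k.+2) ->
     `|L alpha w| * vnorm (under (toR R w)) ^+ (d - 1) >=
       Num.min (1 / (2 * Dkl R z k.+1 (d - 1)))
               (Dkl R z k.+1 2 ^+ (d - 1) /
                  (2 * Dkl R z k.+2 (d - 1) * Bk R z k.+1 ^+ (d - 1)))).
Proof.
case: d z a1 a2 alpha => [|[|[|n]]] // z a1 a2 alpha _ basis_z n12 n23 obtuse12 growth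
  free1 _ alpha1 alpha2 inS1 inS2 sign2.
rewrite !subn1 /= in growth free1 *.
have {}growth m : (2 <= m)%N -> (m < n.+2)%N ->
    vnorm (uz R z k.+2) * detLam R z k.+1 m < detLam R z k.+1 m.+1.
  by move=> m2 mn; apply: (growth (leq_ltn_trans m2 mn) m.+1).
split; [|split].
- by move=> w; apply: (normL_z1_minimal (a1 := a1) (a2 := a2)).
- exact: (normL_z1_bounds (a2 := a2)).
- by move=> w; apply: (normL_lower_bound (a1 := a1) (a2 := a2)).
Qed.
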